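(* Fix $\hat\Sigma\in\mathbb{P}_d$ and $\alpha>0$. Define $\mathcal{B}_R(\hat\Sigma;\alpha)=\{A\in\mathbb{P}_d:\delta_R(A,\hat\Sigma)\le\alpha\}$ and, for $\rho>0$, $\mathcal{B}_S(\hat\Sigma;\rho)=\{A\in\mathbb{P}_d:\delta_S^2(A,\hat\Sigma)\le\rho\}$. Then $\mathcal{B}_R(\hat\Sigma;\alpha)\subseteq\mathcal{B}_S(\hat\Sigma;C\alpha)$ for every $C\ge\alpha/8$.
   Context: $\mathbb{P}_d$ denotes the set of real symmetric $d\times d$ positive definite matrices. The Riemannian distance is $\delta_R(A,B)=\|\log(A^{-1/2}BA^{-1/2})\|_F$ (matrix logarithm, Frobenius norm). The S-divergence is $\delta_S^2(A,B)=\log\det\left(\frac{A+B}{2}\right)-\frac12\log\det(AB)$, and $\delta_S=\sqrt{\delta_S^2}$. *)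

From HB Require Import structures.
From mathcomp Require Import all_boot all_order all_algebra.
From mathcomp Require Import boolp classical_sets reals exp.
Set Implicit Arguments. Unset Strict Implicit. Unset Printing Implicit Defensive.
Import Order.TTheory GRing.Theory Num.Theory.
Local Open Scope ring_scope.

Section SPD.
Variables (R : realType) (d : nat).

Definition symmetric (A : 'M[R]_d) : Prop := A^T = A.

Definition posdef (A : 'M[R]_d) : Prop :=
  symmetric A /\ forall x : 'rV[R]_d, x != 0 -> 0 < (x *m A *m x^T) 0 0.

Definition orthogonal (U : 'M[R]_d) : Prop := U *m U^T = 1%:M.

Definition spec_dec (A : 'M[R]_d) (p : 'M[R]_d * 'rV[R]_d) : Prop :=
  orthogonal p.1 /\ A = p.1^T *m diag_mx p.2 *m p.1.

(* primary matrix function f(A) of a symmetric matrix via its spectral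
   decomposition (0 if A has none, which does not happen for symmetric A) *)
Definition mfun (f : R -> R) (A : 'M[R]_d) : 'M[R]_d :=
  match pselect (exists p, spec_dec A p) with
  | left h => let p := projT1 (cid h) in
              p.1^T *m diag_mx (map_mx f p.2) *m p.1
  | right _ => 0
  end.

Definition msqrt (A : 'M[R]_d) : 'M[R]_d := mfun Num.sqrt A.
Definition minvsqrt (A : 'M[R]_d) : 'M[R]_d := invmx (msqrt A).
Definition mlog (A : 'M[R]_d) : 'M[R]_d := mfun (@ln R) A.

Definition frob (M : 'M[R]_d) : R := Num.sqrt (\sum_i \sum_j M i j ^+ 2).

Definition deltaR (A B : 'M[R]_d) : R :=
  frob (mlog (minvsqrt A *m B *m minvsqrt A)).

Definition deltaS2 (A B : 'M[R]_d) : R :=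
  @ln R (\det ((2%:R)^-1 *: (A + B))) - (2%:R)^-1 * @ln R (\det (A *m B)).

Definition ballR (S : 'M[R]_d) (alpha : R) : set 'M[R]_d :=
  [set A | posdef A /\ deltaR A S <= alpha].

Definition ballS (S : 'M[R]_d) (rho : R) : set 'M[R]_d :=
  [set A | posdef A /\ deltaS2 A S <= rho].

End SPD.

From Pilot Require Import Defs.
From HB Require Import structures.
From mathcomp Require Import all_boot all_order all_algebra.
From mathcomp Require Import boolp classical_sets reals exp.
From mathcomp Require Import functions topology normedtype derive realfun.
From mathcomp Require Import sesquilinear spectral complex.
From mathcomp Require Import ring lra.
Set Implicit Arguments. Unset Strict Implicit. Unset Printing Implicit Defensive.
Import Order.TTheory GRing.Theory Num.Theory.
Import numFieldNormedType.Exports.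
Local Open Scope ring_scope.
Local Open Scope classical_set_scope.

(* The map X |-> A^{-1/2} X A^{-1/2} is a congruence, which leaves the
   S-divergence unchanged and sends the pair (A, Sig) to (1, M) with
   M = A^{-1/2} Sig A^{-1/2}; by definition deltaR A Sig = ||log M||_F.
   Diagonalising M = V^T diag(w) V gives deltaR^2 = sum_i (ln w_i)^2 and
   deltaS2 = sum_i (ln ((1 + w_i)/2) - (ln w_i)/2), and with w_i = e^{t_i} each
   summand of the latter is ln cosh (t_i/2) <= t_i^2/8.  Hence on the ball
   deltaS2 <= deltaR^2/8 <= alpha^2/8 <= C alpha.
   The diagonalisation itself (the spectral theorem behind mfun) is proved by
   induction, reflecting a unit eigenvector onto the first basis vector with a
   Householder matrix; the eigenvalue is real because the complexified matrix
   is Hermitian. *)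

Section ScalarBound.
Variable R : realType.

Section MonotoneOfDerive.
Variables (f f' : R -> R).
Hypothesis f_derive : forall x : R, 0 < x -> is_derive x (1 : R) f (f' x).

Let derivable_f (x : R) : 0 < x -> derivable f x 1.
Proof. by move=> /f_derive []. Qed.

Let derive1_f (x : R) : 0 < x -> f^`() x = f' x.
Proof. by move=> /f_derive [_ df]; rewrite derive1E. Qed.

Let derivable_itv (a b : R) : 0 < a ->
  {in `]a, b[%R, forall x, derivable f x 1} /\ {within `[a, b], continuous f}.
Proof.
move=> a_gt0; split => [x|]; last apply: derivable_within_continuous => x;
  by rewrite in_itv /= => /andP[ax _]; apply: derivable_f; lra.
Qed.

Lemma ler_of_derive_ge0 (a b : R) : 0 < a -> a <= b ->
  (forall x, a < x < b -> 0 <= f' x) -> f a <= f b.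
Proof.
move=> a_gt0 le_ab f'_ge0; have [df cf] := derivable_itv b a_gt0.
apply: (ger0_derive1_ndecr df _ cf) => // x; rewrite in_itv /= => /andP[ax xb].
by rewrite derive1_f ?f'_ge0 ?ax //; lra.
Qed.

Lemma ger_of_derive_le0 (a b : R) : 0 < a -> a <= b ->
  (forall x, a < x < b -> f' x <= 0) -> f b <= f a.
Proof.
move=> a_gt0 le_ab f'_le0; have [df cf] := derivable_itv b a_gt0.
apply: (ler0_derive1_nincr df _ cf) => // x; rewrite in_itv /= => /andP[ax xb].
by rewrite derive1_f ?f'_le0 ?ax //; lra.
Qed.

End MonotoneOfDerive.

Lemma ln_ge1BV (x : R) : 0 < x -> 1 - x^-1 <= ln x.
Proof.
move=> x_gt0; have xV_gt0 : 0 < x^-1 by rewrite invr_gt0.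
have := @le_ln1Dx R (x^-1 - 1); rewrite addrCA subrr addr0 lnV ?posrE //.
have gtN1 : -1 < x^-1 - 1 by lra.
by move=> /(_ gtN1); lra.
Qed.

Lemma ln_prod I (r : seq I) (F : I -> R) : (forall i, 0 < F i) ->
  ln (\prod_(i <- r) F i) = \sum_(i <- r) ln (F i).
Proof.
move=> F_gt0; elim: r => [|i r IHr]; first by rewrite !big_nil ln1.
by rewrite !big_cons lnM ?IHr // posrE ?prodr_gt0.
Qed.

Definition ln_mean_gap : R -> R := (cst 1 + id) * @ln R - cst 2 * (id - cst 1).

Lemma ln_mean_gapE (w : R) : ln_mean_gap w = (1 + w) * ln w - 2 * (w - 1).
Proof. by []. Qed.

Lemma ln_mean_gap1 : ln_mean_gap 1 = 0.
Proof. by rewrite ln_mean_gapE ln1; ring. Qed.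

Lemma is_derive_ln_mean_gap (x : R) : 0 < x ->
  is_derive x (1 : R) ln_mean_gap (ln x + x^-1 - 1).
Proof.
move=> x_gt0; apply: is_derive_eq.
  by apply: is_deriveB; apply: is_deriveM; apply: is_derive1_ln.
rewrite /= !subr0 add0r !scaler0 addr0 !scaler1.
change ((1 + x) * x^-1 + ln x - 2 = ln x + x^-1 - 1).
by field; rewrite gt_eqF.
Qed.

Lemma ln_mean_gap_ndecr (a b : R) : 0 < a -> a <= b ->
  ln_mean_gap a <= ln_mean_gap b.
Proof.
move=> a_gt0 le_ab; apply: (ler_of_derive_ge0 is_derive_ln_mean_gap) => // x.
by move=> /andP[ax _]; have := ln_ge1BV (lt_trans a_gt0 ax); lra.
Qed.

Definition ln_cosh_gap : R -> R :=
  cst 8^-1 * (@ln R * @ln R) - (@ln R \o (cst 1 + id)) + cst 2^-1 * @ln R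
  + cst (ln 2).

Lemma ln_cosh_gapE (w : R) : 0 < w ->
  ln_cosh_gap w = 8^-1 * ln w ^+ 2 - (ln ((1 + w) / 2) - 2^-1 * ln w).
Proof.
move=> w_gt0; rewrite -[LHS]/(8^-1 * (ln w * ln w) - ln (1 + w) + 2^-1 * ln w + ln 2).
by rewrite ln_div ?posrE ?expr2; lra.
Qed.

Lemma is_derive_ln_cosh_gap (x : R) : 0 < x ->
  is_derive x (1 : R) ln_cosh_gap (ln_mean_gap x / (4 * x * (1 + x))).
Proof.
move=> x_gt0; have x1_gt0 : 0 < 1 + x by lra.
apply: is_derive_eq.
  apply: is_deriveD; apply: is_deriveD; first apply: is_deriveB.
  - by apply: is_deriveM; apply: is_deriveM; apply: is_derive1_ln.
  - by apply: is_derive1_comp; apply: is_derive1_ln.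
  - by apply: is_deriveM; apply: is_derive1_ln.
rewrite /= !scaler0 !addr0 add0r ln_mean_gapE.
change (8^-1 * (ln x * x^-1 + ln x * x^-1) - (1 + x)^-1 * 1 + 2^-1 * x^-1
  = ((1 + x) * ln x - 2 * (x - 1)) / (4 * x * (1 + x))).
by field; rewrite !gt_eqF.
Qed.

Lemma ln_cosh_gap_ge0 (w : R) : 0 < w -> 0 <= ln_cosh_gap w.
Proof.
move=> w_gt0; have -> : 0 = ln_cosh_gap 1.
  by rewrite -[RHS]/(8^-1 * (ln 1 * ln 1) - ln 2 + 2^-1 * ln 1 + ln 2) ln1; lra.
have den_gt0 (x : R) : 0 < x -> 0 < 4 * x * (1 + x).
  by move=> x_gt0; rewrite !mulr_gt0 //; lra.
have [le1w|ltw1] := leP 1 w.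
- apply: (ler_of_derive_ge0 is_derive_ln_cosh_gap) => // x /andP[x1 _].
  have x_gt0 : 0 < x by lra.
  rewrite divr_ge0 ?(ltW (den_gt0 _ _)) // -ln_mean_gap1.
  by rewrite ln_mean_gap_ndecr // ltW.
- apply: (ger_of_derive_le0 is_derive_ln_cosh_gap) => //; first exact: ltW.
  move=> x /andP[wx x1]; have x_gt0 : 0 < x by lra.
  rewrite mulr_le0_ge0 ?invr_ge0 ?(ltW (den_gt0 _ _)) // -ln_mean_gap1.
  by rewrite ln_mean_gap_ndecr // ltW.
Qed.

Lemma ln_cosh_bound (w : R) : 0 < w ->
  ln ((1 + w) / 2) - 2^-1 * ln w <= 8^-1 * ln w ^+ 2.
Proof. by move=> w_gt0; have := ln_cosh_gap_ge0 w_gt0; rewrite ln_cosh_gapE //; lra.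
Qed.

End ScalarBound.

Lemma symmetric_real_eigenvalue (R : rcfType) n (A : 'M[R]_n.+1) :
  A^T = A -> exists r : R, \det (A - r%:M) = 0.
Proof.
move=> A_sym; pose Ac := map_mx (real_complex R) A.
have Ac_herm : Ac \is hermsymmx.
  apply: realsym_hermsym.
    apply/is_hermitianmxP; rewrite expr0 scale1r.
    by apply/matrixP => i j; rewrite !mxE /= -{1}A_sym mxE.
  by apply/mxOverP => i j; apply/complex_realP; exists (A i j); rewrite mxE.
have /orthomx_spectralP Ac_diag := hermitian_normalmx Ac_herm.
have [r zE] : exists r, spectral_diag Ac 0 0 = r%:C%C.
  exact/complex_realP/(mxOverP (hermitian_spectral_diag_real Ac_herm)).
exists r; apply: (@complexI R); rewrite rmorph0 -det_map_mx map_mxB /= -/Ac.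
rewrite (_ : map_mx _ _ = (spectral_diag Ac 0 0)%:M); last first.
  by apply/matrixP => i j; rewrite !mxE zE rmorphMn.
set P := spectralmx Ac in Ac_diag *; set D := spectral_diag Ac in Ac_diag zE *.
have -> : Ac - (D 0 0)%:M = invmx P *m (diag_mx D - (D 0 0)%:M) *m P.
  rewrite {1}Ac_diag mulmxBr mulmxBl mul_mx_scalar -scalemxAl.
  by rewrite mulVmx ?spectral_unit // scalemx1.
rewrite !det_mulmx -diag_const_mx -linearB /= det_diag.
by rewrite (bigD1 0) //= !mxE subrr mul0r mulr0 mul0r.
Qed.

Section Reflection.
Variable R : realFieldType.

Lemma mulmx_tr_gt0 n (x : 'rV[R]_n) : x != 0 -> 0 < (x *m x^T) 0 0.
Proof.
have sq_ge0 j : 0 <= x 0 j ^+ 2 by rewrite sqr_ge0.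
have -> : (x *m x^T) 0 0 = \sum_j x 0 j ^+ 2.
  by rewrite mxE; apply: eq_bigr => j _; rewrite mxE expr2.
rewrite lt_def sumr_ge0 // andbT; apply: contra => /eqP /psumr_eq0P x0.
apply/eqP/matrixP => i j; rewrite ord1 mxE; apply/eqP.
by rewrite -sqrf_eq0 x0.
Qed.

Lemma householder n (u : 'rV[R]_n.+1) : u *m u^T = 1%:M ->
  exists H : 'M[R]_n.+1, [/\ H^T = H, H *m H = 1%:M & delta_mx 0 0 *m H = u].
Proof.
move=> uu; set e : 'rV[R]_n.+1 := delta_mx 0 0.
have [->|u_neq_e] := eqVneq u e; first by exists 1%:M; rewrite trmx1 !mulmx1.
have ee : e *m e^T = 1%:M.
  by rewrite /e trmx_delta mul_delta_mx; apply/matrixP => i j; rewrite !ord1 !mxE.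
pose a := (e *m u^T) 0 0.
have eu : e *m u^T = a%:M by rewrite [LHS]mx11_scalar.
have ue : u *m e^T = a%:M by rewrite [LHS]mx11_scalar -[_ *m _]trmxK trmx_mul trmxK mxE.
pose w := e - u; pose q := (w *m w^T) 0 0.
have ww : w *m w^T = q%:M by rewrite [LHS]mx11_scalar.
have qE : q = 2 - 2 * a.
  by rewrite /q /w linearB /= mulmxBl !mulmxBr ee eu ue uu !mxE /=; ring.
have q_neq0 : q != 0 by rewrite gt_eqF // mulmx_tr_gt0 // subr_eq0 eq_sym.
pose W := w^T *m w.
have WW : W *m W = q *: W.
  by rewrite /W mulmxA -[w^T *m w *m w^T]mulmxA ww mul_mx_scalar scalemxAl.
(* the reflection in the hyperplane orthogonal to w *)
exists (1%:M - (2 / q) *: W); split.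
- by rewrite linearB /= linearZ /= trmx1 /W trmx_mul trmxK.
- rewrite mulmxBl !mulmxBr mul1mx mulmx1 -!scalemxAl -!scalemxAr WW !scalerA.
  have -> : 2 / q * (2 / q) * q = 2 / q + 2 / q by field.
  by rewrite mul1mx scalerDl opprB addrK subrK.
- have ew : e *m w^T = (1 - a)%:M by rewrite /w linearB /= mulmxBr ee eu raddfB.
  rewrite mulmxBr mulmx1 -scalemxAr /W mulmxA ew mul_scalar_mx scalerA.
  have -> : 2 / q * (1 - a) = 1 by rewrite qE; field; rewrite -qE.
  by rewrite scale1r /w opprB addrC subrK.
Qed.

End Reflection.

Lemma symmetric_unit_eigenvector (R : rcfType) n (A : 'M[R]_n.+1) : A^T = A ->
  exists (u : 'rV[R]_n.+1) (r : R), u *m u^T = 1%:M /\ u *m A = r *: u.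
Proof.
move=> A_sym; have [r /eqP/det0P [v v_neq0 vAr]] := symmetric_real_eigenvalue A_sym.
have vA : v *m A = r *: v.
  by apply/eqP; rewrite -subr_eq0 -mul_mx_scalar -mulmxBr vAr.
set s := (v *m v^T) 0 0; have s_gt0 : 0 < s := mulmx_tr_gt0 v_neq0.
have vv : v *m v^T = s%:M by rewrite [LHS]mx11_scalar.
exists ((Num.sqrt s)^-1 *: v), r; split; last by rewrite -scalemxAl vA !scalerA mulrC.
rewrite linearZ /= -scalemxAl -scalemxAr scalerA vv -mul_scalar_mx -scalar_mxM.
by rewrite -invfM -expr2 sqr_sqrtr ?ltW // mulVf ?gt_eqF.
Qed.

Section SpectralTheorem.
Variable R : realType.

Lemma spec_dec_reflect n (H B U : 'M[R]_n) (v : 'rV[R]_n) :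
  H^T = H -> H *m H = 1%:M -> spec_dec B (U, v) -> spec_dec (H *m B *m H) (U *m H, v).
Proof.
move=> H_sym HH [/= U_orth ->]; split => /=.
  by rewrite /Defs.orthogonal trmx_mul H_sym mulmxA -(mulmxA U) HH mulmx1.
by rewrite trmx_mul H_sym !mulmxA.
Qed.

Lemma spec_dec_block n (r : R) (A : 'M[R]_n) (U : 'M[R]_n) (v : 'rV[R]_n) :
  spec_dec A (U, v) ->
  spec_dec (block_mx r%:M 0 0 A : 'M_(1 + n)) (block_mx 1%:M 0 0 U, row_mx r%:M v).
Proof.
move=> [/= U_orth AE]; split => /=.
  rewrite /Defs.orthogonal tr_block_mx mulmx_block !trmx0 trmx1.
  by rewrite !mulmx0 !mul0mx !addr0 !add0r mulmx1 U_orth -scalar_mx_block.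
rewrite tr_block_mx diag_mx_row !mulmx_block !trmx0 trmx1 !mulmx0 !mul0mx.
rewrite !addr0 !add0r !mul1mx !mulmx1 mul0mx -AE; congr block_mx.
by apply/matrixP => i j; rewrite !ord1 !mxE.
Qed.

Lemma symmetric_eigen_row0 n (B : 'M[R]_(1 + n)) (r : R) : B^T = B ->
  delta_mx 0 0 *m B = r *: delta_mx 0 0 :> 'rV_(1 + n) ->
  B = block_mx r%:M 0 0 (drsubmx B).
Proof.
move=> B_sym eB; have B0 k : B 0 k = r * (k == 0)%:R.
  by have /matrixP/(_ 0 k) := eB; rewrite -rowE !mxE.
have lshift0 : lshift n (0 : 'I_1) = 0 by apply/val_inj.
have rshift_neq0 (j : 'I_n) : (rshift 1 j == 0) = false by [].
rewrite -[LHS](submxK B); congr block_mx; apply/matrixP => i j; rewrite !mxE ord1.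
- by rewrite !ord1 lshift0 B0 eqxx mulr1.
- by rewrite lshift0 B0 rshift_neq0 mulr0.
- by rewrite lshift0 -[B]B_sym mxE B0 rshift_neq0 mulr0.
Qed.

Lemma symmetric_spec_dec n (A : 'M[R]_n) : A^T = A -> exists p, spec_dec A p.
Proof.
elim: n A => [|n IHn] A A_sym.
  exists (1%:M, 0); split; first by rewrite /Defs.orthogonal trmx1 mulmx1.
  by apply/matrixP => -[].
have [u [r [uu uA]]] := symmetric_unit_eigenvector A_sym.
have [H [H_sym HH eH]] := householder uu.
pose B : 'M[R]_(1 + n) := H *m A *m H.
have B_sym : B^T = B by rewrite /B !trmx_mul H_sym A_sym mulmxA.
have eB : delta_mx 0 0 *m B = r *: delta_mx 0 0 :> 'rV_(1 + n).
  by rewrite /B !mulmxA eH uA -scalemxAl -eH -mulmxA HH mulmx1.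
have [[U v] Ud] : exists p, spec_dec (drsubmx B) p.
  by apply: IHn; rewrite trmx_drsub B_sym.
have AE : A = H *m (block_mx r%:M 0 0 (drsubmx B) : 'M_(1 + n)) *m H.
  by rewrite -symmetric_eigen_row0 // /B !mulmxA HH mul1mx -mulmxA HH mulmx1.
by rewrite AE; eexists; apply: spec_dec_reflect H_sym HH (spec_dec_block r Ud).
Qed.

End SpectralTheorem.

Section SPD.
Variables (R : realType) (d : nat).
Implicit Types (A B M Q U : 'M[R]_d) (a b : 'rV[R]_d).

Lemma mfun_spec_dec (f : R -> R) A : A^T = A ->
  exists2 p, spec_dec A p & mfun f A = p.1^T *m diag_mx (map_mx f p.2) *m p.1.
Proof.
move=> A_sym; rewrite /mfun; case: pselect => [h|[]]; last exact: symmetric_spec_dec.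
by exists (projT1 (cid h)); first exact: projT2 (cid h).
Qed.

Lemma orthogonal_trK U : Defs.orthogonal U -> U^T *m U = 1%:M.
Proof. exact: mulmx1C. Qed.

Lemma mulmx_orth_diag U a b : Defs.orthogonal U ->
  (U^T *m diag_mx a *m U) *m (U^T *m diag_mx b *m U)
  = U^T *m diag_mx (\row_j (a 0 j * b 0 j)) *m U.
Proof.
move=> U_orth; rewrite -!mulmxA (mulmxA U) U_orth mul1mx.
by rewrite (mulmxA (diag_mx a)) mulmx_diag.
Qed.

Lemma tr_orth_diag U a : (U^T *m diag_mx a *m U)^T = U^T *m diag_mx a *m U.
Proof. by rewrite !trmx_mul trmxK tr_diag_mx mulmxA. Qed.

Lemma det_orth_diag U a : Defs.orthogonal U ->
  \det (U^T *m diag_mx a *m U) = \prod_i a 0 i.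
Proof.
move=> U_orth; rewrite !det_mulmx det_diag mulrAC -det_mulmx orthogonal_trK //.
by rewrite det1 mul1r.
Qed.

Lemma orth_diag_const (c : R) U : Defs.orthogonal U ->
  U^T *m diag_mx (const_mx c) *m U = c%:M.
Proof.
move=> U_orth; rewrite diag_const_mx mul_mx_scalar -scalemxAl.
by rewrite orthogonal_trK // scalemx1.
Qed.

Lemma frob_tr (X : 'M[R]_d) : frob X = Num.sqrt (\tr (X *m X^T)).
Proof.
congr Num.sqrt; apply: eq_bigr => i _; rewrite mxE.
by apply: eq_bigr => j _; rewrite [X^T _ _]mxE expr2.
Qed.

Lemma frob_orth_diag U a : Defs.orthogonal U ->
  frob (U^T *m diag_mx a *m U) = Num.sqrt (\sum_i a 0 i ^+ 2).
Proof.
move=> U_orth; rewrite frob_tr tr_orth_diag mulmx_orth_diag // mxtrace_mulC.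
rewrite mulmxA U_orth mul1mx mxtrace_diag.
by congr Num.sqrt; apply: eq_bigr => j _; rewrite mxE expr2.
Qed.

Lemma posdef_spec_dec_gt0 A U v : posdef A -> spec_dec A (U, v) -> forall i, 0 < v 0 i.
Proof.
move=> [_ A_pos] [/= U_orth AE] i; pose x := (delta_mx 0 i : 'rV[R]_d) *m U.
have xUT : x *m U^T = delta_mx 0 i by rewrite -mulmxA U_orth mulmx1.
clearbody x; have x_neq0 : x != 0.
  apply: contraTneq isT => x0; move: xUT; rewrite x0 mul0mx => /matrixP/(_ 0 i).
  by rewrite !mxE !eqxx => /eqP; rewrite eq_sym oner_eq0.
have UxT : U *m x^T = (x *m U^T)^T by rewrite trmx_mul trmxK.
have := A_pos x x_neq0; rewrite AE !mulmxA xUT -mulmxA UxT xUT trmx_delta.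
by rewrite -colE mxE -rowE !mxE eqxx mulr1n.
Qed.

Lemma posdef_det_gt0 A : posdef A -> 0 < \det A.
Proof.
move=> A_pd; have [[U v] Ad] := symmetric_spec_dec A_pd.1.
have v_gt0 := posdef_spec_dec_gt0 A_pd Ad.
by case: Ad => /= U_orth ->; rewrite det_orth_diag // prodr_gt0.
Qed.

Lemma posdef1 : posdef (1%:M : 'M[R]_d).
Proof. by split=> [|x x_neq0]; [exact: trmx1 | rewrite mulmx1 mulmx_tr_gt0]. Qed.

Lemma posdefD A B : posdef A -> posdef B -> posdef (A + B).
Proof.
move=> [A_sym A_pos] [B_sym B_pos]; split=> [|x x_neq0].
  by rewrite /Defs.symmetric linearD /= A_sym B_sym.
by rewrite mulmxDr mulmxDl mxE addr_gt0 ?A_pos ?B_pos.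
Qed.

Lemma posdefZ (c : R) A : 0 < c -> posdef A -> posdef (c *: A).
Proof.
move=> c_gt0 [A_sym A_pos]; split=> [|x x_neq0].
  by rewrite /Defs.symmetric linearZ /= A_sym.
by rewrite -scalemxAr -scalemxAl mxE mulr_gt0 ?A_pos.
Qed.

Lemma posdef_congr P A : P \in unitmx -> posdef A -> posdef (P^T *m A *m P).
Proof.
move=> P_unit [A_sym A_pos]; split=> [|x x_neq0].
  by rewrite /Defs.symmetric !trmx_mul trmxK A_sym mulmxA.
have -> : x *m (P^T *m A *m P) *m x^T = x *m P^T *m A *m (x *m P^T)^T.
  by rewrite trmx_mul trmxK !mulmxA.
apply: A_pos; apply: contraNneq x_neq0 => xPT0.
have PT_unit : P^T \in unitmx by rewrite unitmx_tr.
by rewrite -[x]mulmx1 -(mulmxV PT_unit) mulmxA xPT0 mul0mx.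
Qed.

Lemma msqrt_posdef A : posdef A ->
  [/\ (msqrt A)^T = msqrt A, msqrt A *m msqrt A = A & msqrt A \in unitmx].
Proof.
move=> A_pd; rewrite /msqrt.
have [[U v] [/= U_orth AE] ->] := mfun_spec_dec Num.sqrt A_pd.1.
have v_gt0 := posdef_spec_dec_gt0 A_pd (conj U_orth AE).
split; first exact: tr_orth_diag.
  rewrite mulmx_orth_diag // AE; congr (_ *m diag_mx _ *m _).
  by apply/matrixP => i j; rewrite !ord1 !mxE -expr2 sqr_sqrtr // ltW.
rewrite unitmxE det_orth_diag // unitfE gt_eqF // prodr_gt0 // => i _.
by rewrite mxE sqrtr_gt0.
Qed.

Lemma deltaS2_congr Q A B : Q \in unitmx -> posdef A -> posdef B ->
  deltaS2 (Q *m A *m Q^T) (Q *m B *m Q^T) = deltaS2 A B.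
Proof.
move=> Q_unit A_pd B_pd; set q := \det Q ^+ 2.
have q_gt0 : 0 < q by rewrite exprn_even_gt0 //= -unitfE -unitmxE.
have det_congr X : \det (Q *m X *m Q^T) = q * \det X.
  by rewrite !det_mulmx det_tr /q; ring.
clearbody q.
have half_gt0 : 0 < \det (2^-1 *: (A + B)).
  by apply/posdef_det_gt0/posdefZ/posdefD; rewrite ?invr_gt0.
have [A_gt0 B_gt0] := (posdef_det_gt0 A_pd, posdef_det_gt0 B_pd).
rewrite /deltaS2 -mulmxDl -mulmxDr scalemxAl scalemxAr.
rewrite [\det (_ *m (Q *m _ *m _))]det_mulmx.
by rewrite !det_congr det_mulmx !lnM ?posrE ?mulr_gt0 //; lra.
Qed.

Lemma deltaS2_1_spec M V w : spec_dec M (V, w) -> (forall i, 0 < w 0 i) ->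
  deltaS2 1%:M M = \sum_i (ln ((1 + w 0 i) / 2) - 2^-1 * ln (w 0 i)).
Proof.
move=> [/= V_orth ->] w_gt0; rewrite /deltaS2.
have -> : 2^-1 *: (1%:M + V^T *m diag_mx w *m V)
    = V^T *m diag_mx (\row_i ((1 + w 0 i) / 2)) *m V.
  rewrite -(orth_diag_const 1 V_orth) -mulmxDl -mulmxDr -linearD.
  rewrite scalemxAl scalemxAr -linearZ /=.
  by congr (_ *m diag_mx _ *m _); apply/matrixP => i j; rewrite !mxE ord1 mulrC.
have mid_gt0 i : 0 < (1 + w 0 i) / 2 by have := w_gt0 i; lra.
rewrite mul1mx !det_orth_diag // !ln_prod => [|i|i]; rewrite ?mxE //.
by rewrite sumrB mulr_sumr; congr (_ - _); apply: eq_bigr => i _; rewrite mxE.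
Qed.

Lemma deltaS2_1_le M : posdef M -> deltaS2 1%:M M <= 8^-1 * frob (mlog M) ^+ 2.
Proof.
move=> M_pd; rewrite /mlog; have [[V w] Md ->] := mfun_spec_dec (@ln R) M_pd.1.
have w_gt0 := posdef_spec_dec_gt0 M_pd Md; have [/= V_orth _] := Md.
rewrite (deltaS2_1_spec Md w_gt0) frob_orth_diag // sqr_sqrtr; last first.
  by apply: sumr_ge0 => i _; exact: sqr_ge0.
by rewrite mulr_sumr ler_sum // => i _; rewrite mxE ln_cosh_bound.
Qed.

Lemma deltaS2_le_deltaR A B : posdef A -> posdef B ->
  deltaS2 A B <= 8^-1 * deltaR A B ^+ 2.
Proof.
move=> A_pd B_pd; have [Q_sym QQ Q_unit] := msqrt_posdef A_pd.
set Q := msqrt A in Q_sym QQ Q_unit.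
have iQ_sym : (invmx Q)^T = invmx Q by rewrite trmx_inv Q_sym.
pose M := invmx Q *m B *m invmx Q.
have M_pd : posdef M.
  by rewrite /M -{1}iQ_sym; apply: posdef_congr; rewrite ?unitmx_inv.
have -> : deltaS2 A B = deltaS2 1%:M M.
  rewrite -(deltaS2_congr Q_unit posdef1 M_pd) Q_sym mulmx1 QQ /M !mulmxA.
  by rewrite mulmxV // mul1mx -mulmxA mulVmx // mulmx1.
exact: deltaS2_1_le.
Qed.

End SPD.

Theorem mainTheorem5 (R : realType) (d : nat) (Sig : 'M[R]_d) (alpha : R) :
  posdef Sig -> 0 < alpha ->
  forall C : R, alpha / 8%:R <= C ->
  ballR Sig alpha `<=` ballS Sig (C * alpha).
Proof.
move=> Sig_pd alpha_gt0 C le_C A [A_pd dR_le]; split => //.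
have dR2_le : deltaR A Sig ^+ 2 <= alpha ^+ 2.
  by rewrite lerXn2r // nnegrE ?sqrtr_ge0 ?ltW.
have := deltaS2_le_deltaR A_pd Sig_pd.
have := ler_wpM2r (ltW alpha_gt0) le_C; lra.
Qed.
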